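(* For every $r>0$ there is a constant $C_r$ depending only on $r$ such that for every finite connected undirected unweighted graph $G=(V,E)$ with $n$ vertices and every initial mutant set $S_0\subseteq V$, the expected absorption time of the $\lambda$-mixed Moran process with $\lambda=1/2$ and fitness $r$ started from $S_0$ is at most $C_r n^4$ (i.e., it is $O_r(n^4)$).
   Context: The $\lambda$-mixed Moran process on a connected graph $G=(V,E)$ with $n=|V|\ge 2$: each vertex hosts a resident (fitness $1$) or mutant (fitness $r>0$); the state is the mutant set $S_t\subseteq V$. Each step, independently: with probability $\lambda$ a Birth-death step (a vertex $u$ chosen with probability proportional to fitness among all vertices; a uniformly random neighbor of $u$ takes $u$'s type); with probability $1-\lambda$ a death-Birth step (a uniformly random vertex $v$ dies; a neighbor $u$ of $v$ chosen with probability proportional to fitness among the neighbors of $v$; $v$ takes $u$'s type). The absorption time is the expected number of steps until $S_t\in\{\emptyset,V\}$. *)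

(* finite graphs as symmetric irreflexive relations on a finType. *)
From HB Require Import structures.
From mathcomp Require Import all_boot all_order all_algebra.
From mathcomp Require Export reals.
Set Implicit Arguments. Unset Strict Implicit. Unset Printing Implicit Defensive.
Import Order.TTheory GRing.Theory Num.Theory.
Local Open Scope ring_scope.

Section Moran.
Variables (R : realType) (V : finType) (e : rel V).

Definition fit (r : R) (S : {set V}) (x : V) : R := if x \in S then r else 1.

Definition upd (S : {set V}) (v : V) (b : bool) : {set V} :=
  if b then v |: S else S :\ v.

Definition nbrs (u : V) : {set V} := [set w | e u w].

Definition trans (lam r : R) (S S' : {set V}) : R :=
  lam * (\sum_(u : V) \sum_(v : V | e u v)
           (fit r S u / \sum_(w : V) fit r S w) * (#|nbrs u|%:R)^-1
           * (S' == upd S v (u \in S))%:R)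
  + (1 - lam) * (\sum_(v : V) \sum_(u : V | e v u)
           (#|V|%:R)^-1 * (fit r S u / \sum_(w : V | e v w) fit r S w)
           * (S' == upd S v (u \in S))%:R).

Fixpoint dist (lam r : R) (S0 : {set V}) (t : nat) (S' : {set V}) : R :=
  match t with
  | 0 => (S' == S0)%:R
  | t.+1 => \sum_(S : {set V}) dist lam r S0 t S * trans lam r S S'
  end.

Definition absorbing (S : {set V}) : bool := (S == set0) || (S == setT).

(* sum_{t<N} P(T > t) = sum_{t<N} P(S_t not absorbed); the expected absorption
   time is the supremum over N of these partial sums *)
Definition partial_abs_time (lam r : R) (S0 : {set V}) (N : nat) : R :=
  \sum_(t < N) \sum_(S : {set V} | ~~ absorbing S) dist lam r S0 t S.

End Moran.

From HB Require Import structures.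
From mathcomp Require Import all_boot all_order all_algebra.
From mathcomp Require Import reals.
From mathcomp Require Import ring lra.
Set Implicit Arguments. Unset Strict Implicit. Unset Printing Implicit Defensive.
Import Order.TTheory GRing.Theory Num.Theory.
Local Open Scope ring_scope.

(** With [peak = 0] if [r >= 1] and [peak = n] otherwise, the potential
    [K (n^2 - (|S| - peak)^2)] with [K = 2 (1 + r) n^2 / r] drops by at least 1
    in expectation at every step from a non-absorbing state, so the expected
    absorption time is at most the initial potential, hence at most
    [2 (1 + r) / r * n^4].
    Only edges pq between a mutant p and a resident q change the state. When
    lambda = 1/2, the fitter endpoint of such an edge is at least as likely to
    spread across it as the other one: its Birth-death rate dominates the
    death-Birth rate of the other endpoint and vice versa. So the expected
    change of |S| points away from [peak]; by concavity, each such edge then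
    costs at least K times the probability that q adopts the type of p, and
    this probability is at least r / (2 (1 + r) n^2). *)

Lemma sum_eq_indicator (R : pzSemiRingType) (T : finType) (x : T) (f : T -> R) :
  \sum_(y : T) (y == x)%:R * f y = f x.
Proof.
rewrite (bigD1 x) //= eqxx mul1r big1 ?addr0 // => y /negbTE ->.
by rewrite mul0r.
Qed.

Lemma ler_pdiv (R : numFieldType) (a b c d : R) :
  0 < b -> 0 < d -> a * d <= c * b -> a / b <= c / d.
Proof. by move=> b_gt0 d_gt0; rewrite ler_pdivlMr // mulrAC ler_pdivrMr. Qed.

Section Hitting.
Variables (R : realType) (V : finType) (e : rel V) (lam r : R).
Hypothesis trans_ge0 : forall S S' : {set V}, 0 <= trans e lam r S S'.

Lemma dist_ge0 S0 t S : 0 <= dist e lam r S0 t S.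
Proof.
elim: t S => [|t IH] S /=; first by rewrite ler0n.
by apply: sumr_ge0 => S' _; apply: mulr_ge0.
Qed.

Lemma expect_dist_succ S0 t (phi : {set V} -> R) :
  \sum_S dist e lam r S0 t.+1 S * phi S =
  \sum_S dist e lam r S0 t S * \sum_S' trans e lam r S S' * phi S'.
Proof.
under eq_bigr do rewrite /= big_distrl.
rewrite exchange_big; apply: eq_bigr => S _ /=.
rewrite big_distrr /=; apply: eq_bigr => S' _.
by rewrite mulrA.
Qed.

Lemma partial_abs_time_le_potential (phi : {set V} -> R) :
  (forall S, 0 <= phi S) ->
  (forall S, \sum_S' trans e lam r S S' * phi S' <= phi S - (~~ absorbing S)%:R) ->
  forall S0 N, partial_abs_time e lam r S0 N <= phi S0.
Proof.
move=> phi_ge0 drift S0 N.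
pose Phi t := \sum_S dist e lam r S0 t S * phi S.
suff inv M : partial_abs_time e lam r S0 M + Phi M <= phi S0.
  apply: le_trans (inv N); rewrite lerDl.
  by apply: sumr_ge0 => S _; apply: mulr_ge0 (dist_ge0 _ _ _) (phi_ge0 _).
elim: M => [|M IH].
  by rewrite /partial_abs_time big_ord0 add0r /Phi sum_eq_indicator.
have Phi_succ : Phi M.+1 <= Phi M - \sum_(S | ~~ absorbing S) dist e lam r S0 M S.
  rewrite /Phi expect_dist_succ [X in _ - X]big_mkcond /= -sumrB.
  apply: ler_sum => S _.
  apply: le_trans (ler_wpM2l (dist_ge0 _ _ _) (drift S)) _.
  by rewrite mulrBr; case: (~~ absorbing S); rewrite ?mulr1 ?mulr0 ?subr0.
rewrite /partial_abs_time big_ord_recr /=.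
move: IH Phi_succ; rewrite /partial_abs_time; lra.
Qed.

End Hitting.

Section GraphFacts.
Variables (V : finType) (e : rel V).
Hypothesis e_conn : forall x y : V, connect e x y.

Lemma exists_nbr : (2 <= #|V|)%N -> forall v, exists w, e v w.
Proof.
move=> V_ge2 v.
have [y] : exists y, y \in [set~ v].
  by apply/card_gt0P; rewrite cardsC1 -ltnS prednK ?(ltnW V_ge2).
rewrite !inE => y_neq_v.
case/connectP: (e_conn v y) => [[|w p]] /=.
  by move=> _ y_eq_v; rewrite y_eq_v eqxx in y_neq_v.
by case/andP=> evw _ _; exists w.
Qed.

Lemma boundary_edge (S : {set V}) :
  ~~ absorbing S -> exists p q, [/\ p \in S, q \notin S & e p q].
Proof.
move=> nabs.
have [/existsP[p /existsP[q /and3P[pS qS epq]]]|none] :=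
  boolP [exists p, exists q, [&& p \in S, q \notin S & e p q]]; first by exists p, q.
have closedS : closed e S.
  have e_csym : connect_sym e by move=> x y; rewrite !e_conn.
  apply: (intro_closed e_csym) => x y exy xS; apply: contraNT none => yS.
  by apply/existsP; exists x; apply/existsP; exists y; rewrite xS yS exy.
case: (set_0Vmem S) => [S0|[x xS]]; first by rewrite /absorbing S0 eqxx in nabs.
have ST : S = setT.
  by apply/setP => y; rewrite inE -(closed_connect closedS (e_conn x y)) xS.
by rewrite /absorbing ST eqxx orbT in nabs.
Qed.

End GraphFacts.

Section MixedMoran.
Variables (R : realType) (V : finType) (e : rel V) (r : R).

Implicit Types (S : {set V}) (u v w : V).

Local Notation n := (#|V|%:R : R).
Local Notation deg v := (#|nbrs e v|%:R : R).
Local Notation total_fit S := (\sum_(w : V) fit r S w).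
Local Notation nbr_fit S v := (\sum_(w : V | e v w) fit r S w).

Definition bd_rate (S : {set V}) (u : V) : R := fit r S u / total_fit S * (deg u)^-1.

Definition db_rate (S : {set V}) (v u : V) : R := n^-1 * (fit r S u / nbr_fit S v).

Definition adopt (lam : R) (S : {set V}) (u v : V) : R :=
  lam * bd_rate S u + (1 - lam) * db_rate S v u.

Hypothesis e_sym : symmetric e.
Hypothesis e_conn : forall x y : V, connect e x y.
Hypothesis r_gt0 : 0 < r.
Hypothesis no_isolated : forall v, exists w, e v w.
Hypothesis V_gt0 : (0 < #|V|)%N.

Lemma sum_edges_swap (F : V -> V -> R) :
  \sum_u \sum_(v | e u v) F u v = \sum_u \sum_(v | e u v) F v u.
Proof.
rewrite (exchange_big_dep xpredT) //=.
by apply: eq_bigr => u _; apply: eq_bigl => v; rewrite e_sym.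
Qed.

Lemma expect_trans lam S (phi : {set V} -> R) :
  \sum_S' trans e lam r S S' * phi S' =
  \sum_u \sum_(v | e u v) adopt lam S u v * phi (upd S v (u \in S)).
Proof.
have collapse (P : V -> V -> bool) (c : V -> V -> R) (X : V -> V -> {set V}) :
    \sum_S' (\sum_u \sum_(v | P u v) c u v * (S' == X u v)%:R) * phi S'
    = \sum_u \sum_(v | P u v) c u v * phi (X u v).
  under eq_bigr do rewrite big_distrl.
  rewrite exchange_big; apply: eq_bigr => u _ /=.
  under eq_bigr do rewrite big_distrl.
  rewrite exchange_big; apply: eq_bigr => v _ /=.
  under eq_bigr do rewrite -mulrA.
  by rewrite -mulr_sumr sum_eq_indicator.
rewrite /trans; under eq_bigr do rewrite mulrDl -!mulrA.
rewrite big_split /= -!mulr_sumr !collapse.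
rewrite [X in _ + _ * X]sum_edges_swap !mulr_sumr -big_split.
apply: eq_bigr => u _ /=; rewrite !mulr_sumr -big_split; apply: eq_bigr => v _ /=.
by rewrite /adopt /bd_rate /db_rate; ring.
Qed.

Lemma sum_const_nbrs (c : R) u : \sum_(v | e u v) c = c * deg u.
Proof. by rewrite sumr_const /nbrs cardsE mulr_natr. Qed.

Lemma fit_gt0 S w : 0 < fit r S w.
Proof. by rewrite /fit; case: (w \in S). Qed.

Lemma fit_sum_ge0 S (P : pred V) : 0 <= \sum_(x | P x) fit r S x.
Proof. by apply: sumr_ge0 => x _; exact/ltW/fit_gt0. Qed.

Lemma sum_fit_gt0 S (P : pred V) w : P w -> 0 < \sum_(x | P x) fit r S x.
Proof. by move=> Pw; rewrite (bigD1 w) //= ltr_wpDr ?fit_gt0 ?fit_sum_ge0. Qed.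

Lemma bd_rate_ge0 S u : 0 <= bd_rate S u.
Proof.
by rewrite /bd_rate mulr_ge0 ?invr_ge0 ?divr_ge0 ?fit_sum_ge0 // ltW ?fit_gt0.
Qed.

Lemma db_rate_ge0 S v u : 0 <= db_rate S v u.
Proof.
by rewrite /db_rate mulr_ge0 ?invr_ge0 ?divr_ge0 ?fit_sum_ge0 // ltW ?fit_gt0.
Qed.

Lemma n_gt0 : 0 < n.
Proof. by rewrite ltr0n. Qed.

Lemma deg_gt0 v : 0 < deg v.
Proof.
by have [w evw] := no_isolated v; rewrite ltr0n; apply/card_gt0P; exists w; rewrite inE.
Qed.

Lemma total_fit_gt0 S : 0 < total_fit S.
Proof. by have /card_gt0P[w _] := V_gt0; exact: (@sum_fit_gt0 S (fun=> true) w). Qed.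

Lemma nbr_fit_gt0 S v : 0 < nbr_fit S v.
Proof. by have [w evw] := no_isolated v; exact: sum_fit_gt0 evw. Qed.

Lemma sum_bd_rate S : \sum_u \sum_(v | e u v) bd_rate S u = 1.
Proof.
rewrite -[1](divff (lt0r_neq0 (total_fit_gt0 S))) mulr_suml.
apply: eq_bigr => u _.
by rewrite sum_const_nbrs /bd_rate divfK // lt0r_neq0 // deg_gt0.
Qed.

Lemma sum_db_rate S : \sum_v \sum_(u | e v u) db_rate S v u = 1.
Proof.
transitivity (\sum_(v : V) n^-1).
  apply: eq_bigr => v _; rewrite -mulr_sumr -mulr_suml divff ?mulr1 //.
  exact: lt0r_neq0 (nbr_fit_gt0 S v).
by rewrite sumr_const -[n^-1 *+ _]mulr_natr mulVf // lt0r_neq0 // n_gt0.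
Qed.

Lemma adopt_ge0 lam S u v : 0 <= lam <= 1 -> 0 <= adopt lam S u v.
Proof.
case/andP=> lam_ge0 lam_le1.
by apply: addr_ge0; apply: mulr_ge0; rewrite ?subr_ge0 ?bd_rate_ge0 ?db_rate_ge0.
Qed.

Lemma trans_ge0 lam S S' : 0 <= lam <= 1 -> 0 <= trans e lam r S S'.
Proof.
case/andP=> lam_ge0 lam_le1.
rewrite /trans addr_ge0 // mulr_ge0 ?subr_ge0 //;
  do 2!apply: sumr_ge0 => ? _; rewrite mulr_ge0 ?ler0n //.
- exact: bd_rate_ge0.
- exact: db_rate_ge0.
Qed.

Lemma sum_adopt lam S : \sum_u \sum_(v | e u v) adopt lam S u v = 1.
Proof.
transitivity (lam * \sum_u \sum_(v | e u v) bd_rate S u +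
              (1 - lam) * \sum_u \sum_(v | e u v) db_rate S v u).
  rewrite !mulr_sumr -big_split; apply: eq_bigr => u _ /=.
  by rewrite !mulr_sumr -big_split.
by rewrite -(sum_edges_swap (db_rate S)) sum_bd_rate sum_db_rate !mulr1 subrKC.
Qed.

Lemma sum_bounds (P : pred V) (f : V -> R) a b :
  (forall w, a <= f w <= b) -> a * #|P|%:R <= \sum_(w | P w) f w <= b * #|P|%:R.
Proof.
move=> f_ab; rewrite !mulr_natr -!sumr_const.
by apply/andP; split; apply: ler_sum => w _; case/andP: (f_ab w).
Qed.

Lemma total_fit_bounds S a b :
  (forall w, a <= fit r S w <= b) -> a * n <= total_fit S <= b * n.
Proof. exact: sum_bounds. Qed.

Lemma nbr_fit_bounds S v a b :
  (forall w, a <= fit r S w <= b) -> a * deg v <= nbr_fit S v <= b * deg v.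
Proof. by rewrite /nbrs cardsE; exact: sum_bounds. Qed.

Section FittestSpreads.
Variables (S : {set V}) (u v : V).
Hypothesis fit_range : forall w, fit r S v <= fit r S w <= fit r S u.

Lemma db_rate_le_bd_rate : db_rate S u v <= bd_rate S u.
Proof.
have /andP[_ W_le] := total_fit_bounds fit_range.
have /andP[F_ge _] := nbr_fit_bounds u fit_range.
have fv_gt0 := fit_gt0 S v; have fu_gt0 := fit_gt0 S u.
have d_gt0 := deg_gt0 u; have n0 := n_gt0.
rewrite /db_rate /bd_rate mulrCA -mulrA -!invfM.
apply: ler_pdiv; rewrite ?mulr_gt0 ?nbr_fit_gt0 ?total_fit_gt0 //.
have h1 : 0 <= fit r S v * deg u * (fit r S u * n - total_fit S).
  by rewrite mulr_ge0 ?subr_ge0 // mulr_ge0 // ltW.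
have h2 : 0 <= fit r S u * n * (nbr_fit S u - fit r S v * deg u).
  by rewrite mulr_ge0 ?subr_ge0 // mulr_ge0 // ltW.
nra.
Qed.

Lemma bd_rate_le_db_rate : bd_rate S v <= db_rate S v u.
Proof.
have /andP[W_ge _] := total_fit_bounds fit_range.
have /andP[_ F_le] := nbr_fit_bounds v fit_range.
have fv_gt0 := fit_gt0 S v; have fu_gt0 := fit_gt0 S u.
have d_gt0 := deg_gt0 v; have n0 := n_gt0.
rewrite /db_rate /bd_rate mulrCA -mulrA -!invfM.
apply: ler_pdiv; rewrite ?mulr_gt0 ?nbr_fit_gt0 ?total_fit_gt0 //.
have h1 : 0 <= fit r S v * n * (fit r S u * deg v - nbr_fit S v).
  by rewrite mulr_ge0 ?subr_ge0 // mulr_ge0 // ltW.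
have h2 : 0 <= fit r S u * deg v * (total_fit S - fit r S v * n).
  by rewrite mulr_ge0 ?subr_ge0 // mulr_ge0 // ltW.
nra.
Qed.

Lemma adopt_half_fittest : adopt 2^-1 S v u <= adopt 2^-1 S u v.
Proof.
have := db_rate_le_bd_rate; have := bd_rate_le_db_rate.
rewrite /adopt; lra.
Qed.

End FittestSpreads.

Lemma db_rate_lb S v u : fit r S u / ((1 + r) * n ^+ 2) <= db_rate S v u.
Proof.
have F_le_W : nbr_fit S v <= total_fit S.
  by rewrite [leRHS](bigID (e v)) /= lerDl fit_sum_ge0.
have /andP[_ W_le] : 0 * n <= total_fit S <= (1 + r) * n.
  apply: total_fit_bounds => w; rewrite (ltW (fit_gt0 S w)) /= /fit.
  by case: (w \in S); rewrite ?lerDl ?lerDr ltW.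
have fu_gt0 := fit_gt0 S u; have n0 := n_gt0; have F_gt0 := nbr_fit_gt0 S v.
rewrite /db_rate [leRHS]mulrCA -invfM.
apply: ler_pdiv; rewrite ?mulr_gt0 ?exprn_gt0 ?addr_gt0 //.
rewrite ler_pM2l // expr2 mulrCA ler_pM2l //.
exact: le_trans F_le_W W_le.
Qed.

Lemma sum_edges_change (a : V -> V -> R) (phi : {set V} -> R) S :
  \sum_u \sum_(v | e u v) a u v * (phi (upd S v (u \in S)) - phi S) =
  \sum_p \sum_(q | e p q) ((p \in S) && (q \notin S))%:R *
    (a p q * (phi (q |: S) - phi S) + a q p * (phi (S :\ p) - phi S)).
Proof.
have split u v : a u v * (phi (upd S v (u \in S)) - phi S) =
    ((u \in S) && (v \notin S))%:R * (a u v * (phi (v |: S) - phi S)) +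
    ((u \notin S) && (v \in S))%:R * (a u v * (phi (S :\ v) - phi S)).
  rewrite /upd; case: (boolP (u \in S)) => uS; case: (boolP (v \in S)) => vS /=;
    rewrite ?mul1r ?mul0r ?addr0 ?add0r //.
  - have /setUidPr -> : [set v] \subset S by rewrite sub1set.
    by rewrite subrr mulr0.
  - have /setDidPl -> : [disjoint S & [set v]] by rewrite disjoint_sym disjoints1.
    by rewrite subrr mulr0.
under eq_bigr do under eq_bigr do rewrite split.
under eq_bigr do rewrite big_split /=.
rewrite big_split /= [X in _ + X]sum_edges_swap -big_split /=.
apply: eq_bigr => p _; rewrite -big_split; apply: eq_bigr => q _ /=.
by rewrite andbC -mulrDr.
Qed.

Lemma boundary_count S :
  (~~ absorbing S)%:R <= \sum_p \sum_(q | e p q) ((p \in S) && (q \notin S))%:R :> R.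
Proof.
case: (boolP (absorbing S)) => [_|nabs] /=.
  by do 2!(apply: sumr_ge0 => ? _); rewrite ler0n.
have [p [q [pS qS epq]]] := boundary_edge e_conn nabs.
rewrite (bigD1 p) //= (bigD1 q) //= pS qS /= -addrA lerDl.
by apply: addr_ge0; do ?(apply: sumr_ge0 => ? _); rewrite ler0n.
Qed.

Local Notation K := (2 * (1 + r) / r * n ^+ 2).

Definition peak : R := if 1 <= r then 0 else n.

Definition potential S : R := K * (n ^+ 2 - (#|S|%:R - peak) ^+ 2).

Lemma card_range S : (0 : R) <= #|S|%:R <= n.
Proof. by rewrite ler0n ler_nat max_card. Qed.

Lemma K_gt0 : 0 < K.
Proof. by rewrite !mulr_gt0 ?invr_gt0 ?addr_gt0 ?exprn_gt0 ?n_gt0. Qed.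

Lemma potential_ge0 S : 0 <= potential S.
Proof.
have /andP[x_ge0 x_le] := card_range S.
rewrite /potential mulr_ge0 ?(ltW K_gt0) // subr_ge0 /peak.
case: ifP => _; nra.
Qed.

Lemma potential_le S : potential S <= 2 * (1 + r) / r * n ^+ 4.
Proof.
rewrite /potential -[n ^+ 4]/(n ^+ (2 + 2)) exprD mulrA.
by rewrite ler_pM2l ?K_gt0 // gerBl sqr_ge0.
Qed.

Lemma potential_boundary S p q : p \in S -> q \notin S ->
  adopt 2^-1 S p q * (potential (q |: S) - potential S) +
  adopt 2^-1 S q p * (potential (S :\ p) - potential S) <= -1.
Proof.
move=> pS qS.
have up : potential (q |: S) - potential S = - K * (2 * (#|S|%:R - peak) + 1).
  by rewrite /potential cardsU1 qS natrD /=; ring.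
have down : potential (S :\ p) - potential S = K * (2 * (#|S|%:R - peak) - 1).
  by rewrite /potential [in #|S|](cardsD1 p) pS natrD /=; ring.
rewrite up down.
set y := #|S|%:R - peak; set a := adopt _ S p q; set b := adopt _ S q p.
have half01 : 0 <= (2^-1 : R) <= 1 by apply/andP; split; lra.
have b_ge0 : 0 <= b by exact: adopt_ge0.
have sign : 0 <= y * (a - b).
  have /andP[x_ge0 x_le] := card_range S.
  rewrite /y /peak; case: ifP => r_ge1.
  - rewrite subr0 mulr_ge0 // subr_ge0; apply: adopt_half_fittest => w.
    by rewrite /fit pS (negbTE qS); case: (w \in S); rewrite ?lexx r_ge1.
  - have r_le1 : r <= 1 by rewrite ltW // ltNge r_ge1.
    rewrite mulr_le0 ?subr_le0 //; apply: adopt_half_fittest => w.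
    by rewrite /fit pS (negbTE qS); case: (w \in S); rewrite ?lexx r_le1.
have Ka_ge1 : 1 <= K * a.
  have := db_rate_lb S q p; rewrite {1}/fit pS => db_ge.
  have a_ge : 2^-1 * (r / ((1 + r) * n ^+ 2)) <= a.
    by rewrite /a /adopt; have := bd_rate_ge0 S p; lra.
  apply: le_trans (ler_wpM2l (ltW K_gt0) a_ge).
  rewrite le_eqVlt; apply/orP; left; apply/eqP; field.
  by rewrite !lt0r_neq0 ?addr_gt0 ?n_gt0.
have h1 := mulr_ge0 (ltW K_gt0) sign.
have h2 := mulr_ge0 (ltW K_gt0) b_ge0.
nra.
Qed.

Lemma potential_drift S :
  \sum_S' trans e 2^-1 r S S' * potential S' <= potential S - (~~ absorbing S)%:R.
Proof.
rewrite expect_trans.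
have shift :
    \sum_u \sum_(v | e u v) adopt 2^-1 S u v * potential (upd S v (u \in S)) =
    potential S + \sum_u \sum_(v | e u v)
                    adopt 2^-1 S u v * (potential (upd S v (u \in S)) - potential S).
  under [in RHS]eq_bigr do under eq_bigr do rewrite mulrBr.
  under [in RHS]eq_bigr do rewrite sumrB.
  rewrite sumrB; under [X in _ - X]eq_bigr do rewrite -mulr_suml.
  by rewrite -mulr_suml sum_adopt mul1r addrC subrK.
rewrite shift sum_edges_change lerD2l.
apply: le_trans (_ : _ <= - \sum_p \sum_(q | e p q) ((p \in S) && (q \notin S))%:R) _.
  rewrite -sumrN; apply: ler_sum => p _; rewrite -sumrN; apply: ler_sum => q _.
  case: (boolP (p \in S)) => pS; case: (boolP (q \in S)) => qS /=;
    rewrite ?mul0r ?oppr0 // mul1r.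
  exact: potential_boundary.
by rewrite lerN2 boundary_count.
Qed.

Lemma half_mixed_partial_abs_time_le S0 N :
  partial_abs_time e 2^-1 r S0 N <= 2 * (1 + r) / r * n ^+ 4.
Proof.
have half01 : 0 <= (2^-1 : R) <= 1 by apply/andP; split; lra.
apply: le_trans (potential_le S0).
apply: (partial_abs_time_le_potential _ potential_ge0 potential_drift).
by move=> S S'; exact: trans_ge0.
Qed.

End MixedMoran.

Theorem mainTheorem5 (R : realType) (r : R) (hr : 0 < r) :
  exists C : R,
    forall (V : finType) (e : rel V),
      symmetric e -> irreflexive e ->
      (forall x y : V, connect e x y) ->
      (2 <= #|V|)%N ->
      forall (S0 : {set V}) (N : nat),
        partial_abs_time e (2^-1) r S0 N <= C * (#|V|%:R) ^+ 4.
Proof.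
exists (2 * (1 + r) / r) => V e e_sym _ e_conn V_ge2 S0 N.
apply: half_mixed_partial_abs_time_le => //.
- exact: exists_nbr.
- exact: ltnW.
Qed.
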